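(* Let $p$ be an odd prime, $r=(p-1)/2$, $\zeta_p=e^{2\pi i/p}$, $\varepsilon=(-1)^{(p-1)/2}$, and let $Q$ be either $Q_1(x)=x^2/p$ or $Q_2(x)=cx^2/p$ with $c$ a fixed quadratic non-residue mod $p$; let $B(x,y)=Q(x+y)-Q(x)-Q(y)$ and $G_Q=\sum_{x\in\mathbb{Z}/p\mathbb{Z}}e^{2\pi iQ(x)}$. Define $(r+1)\times(r+1)$ matrices indexed by $0\le j,k\le r$: $T=\operatorname{diag}(\theta_0,\dots,\theta_r)$ with $\theta_j=e^{2\pi iQ(j)}$, and $S$ with $S_{j0}=1/G_Q$ for all $j$, $S_{0k}=2/G_Q$ for $1\le k\le r$, and $S_{jk}=\frac{1}{G_Q}\left(e^{-2\pi iB(j,k)}+e^{2\pi iB(j,k)}\right)$ for $1\le j,k\le r$. Let $\xi:\mathrm{SL}_2(\mathbb{F}_p)\to\mathrm{GL}_{r+1}(\mathbb{Q}(\zeta_p))$ be the representation with $\xi(\mathfrak{s})=S$, $\xi(\mathfrak{t})=T$, where $\mathfrak{s}=\begin{pmatrix}0&-1\\1&0\end{pmatrix}$, $\mathfrak{t}=\begin{pmatrix}1&1\\0&1\end{pmatrix}$. Let $\gamma$ be a generator of the cyclic group $\mathrm{Gal}(\mathbb{Q}(\zeta_p)/\mathbb{Q})$, let $\tau=\gamma^2$, and let $V_Q$ be the Vandermonde matrix with $(j,k)$ entry $\theta_j^{\,k}$ ($0\le j,k\le r$). Then $\tau$ permutes $\{\theta_0,\dots,\theta_r\}$ fixing $\theta_0=1$,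 so there is a unique permutation matrix $P$ with $\tau(V_Q)=P\,V_Q$; and for every $g\in\mathrm{SL}_2(\mathbb{F}_p)$ one has $\tau(\xi(g))=P\,\xi(g)\,P^{-1}$.
   Context: For $\alpha\in\mathrm{Gal}(\mathbb{Q}(\zeta_p)/\mathbb{Q})$ and a matrix $M$ with entries in $\mathbb{Q}(\zeta_p)$, $\alpha(M)$ denotes the matrix obtained by applying $\alpha$ to each entry. The matrices $S,T$ are the matrices of the Weil representation attached to $Q$ restricted to the subspace of even functions $\mathbb{Z}/p\mathbb{Z}\to\mathbb{C}$, in the basis $\delta_0,\ \delta_1+\delta_{p-1},\dots,\delta_r+\delta_{r+1}$; $\xi$ is the principal series Weil representation of dimension $(p+1)/2$ ($\xi_1$ for $Q_1$, $\xi_2$ for $Q_2$). One has $G_{Q}=\pm\sqrt{\varepsilon p}$, where $\sqrt{\varepsilon p}=\sum_x \zeta_p^{x^2}$. *)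

From HB Require Import structures.
From mathcomp Require Import all_boot all_order all_algebra all_fingroup all_field.
Set Implicit Arguments. Unset Strict Implicit. Unset Printing Implicit Defensive.
Import Order.TTheory GRing.Theory Num.Theory.
Local Open Scope ring_scope.

(* zeta_p = e^{2 pi i/p} in algC: p.-root (-1) is e^{i pi/p} (minimal nonneg
   argument), so its square is e^{2 pi i / p}. *)
Definition zeta (p : nat) : algC := (p.-root (-1)) ^+ 2.

Definition rr (p : nat) : nat := (p.-1)./2.

Definition qnr (p c : nat) : bool :=
  (c %% p != 0)%N && [forall x : 'I_p, (x * x %% p != c %% p)%N].

(* Q(x) = a x^2 / p ;  e(Q(x)) = e^{2 pi i Q(x)} = zeta^(a x^2) *)
Definition eQ (p a x : nat) : algC := zeta p ^+ (a * x ^ 2).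

(* e^{2 pi i B(j,k)} with B(j,k) = 2 a j k / p *)
Definition eB (p a j k : nat) : algC := zeta p ^+ (2 * a * j * k).

Definition GQ (p a : nat) : algC := \sum_(x < p) eQ p a x.

Definition theta (p a j : nat) : algC := eQ p a j.

Definition Tmx (p a : nat) : 'M[algC]_((rr p).+1) :=
  diag_mx (\row_(j < (rr p).+1) theta p a j).

Definition Smx (p a : nat) : 'M[algC]_((rr p).+1) :=
  \matrix_(j < (rr p).+1, k < (rr p).+1)
    if (k == 0 :> nat) then (GQ p a)^-1
    else if (j == 0 :> nat) then 2 / GQ p a
    else ((eB p a j k)^-1 + eB p a j k) / GQ p a.

Definition Vmx (p a : nat) : 'M[algC]_((rr p).+1) :=
  \matrix_(j < (rr p).+1, k < (rr p).+1) theta p a j ^+ k.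

Definition inSL2 (p : nat) (g : 'M['F_p]_2) : Prop := \det g = 1.

Definition mat_s (p : nat) : 'M['F_p]_2 :=
  \matrix_(i < 2, j < 2)
    if (i == 0 :> nat) && (j == 1 :> nat) then -1
    else if (i == 1 :> nat) && (j == 0 :> nat) then 1 else 0.

Definition mat_t (p : nat) : 'M['F_p]_2 :=
  \matrix_(i < 2, j < 2)
    if (i == j) || ((i == 0 :> nat) && (j == 1 :> nat)) then 1 else 0.

Definition is_rep (p n : nat) (xi : 'M['F_p]_2 -> 'M[algC]_n) : Prop :=
  (forall g, inSL2 g -> xi g \in unitmx) /\
  (forall g h, inSL2 g -> inSL2 h -> xi (g *m h) = xi g *m xi h).

From HB Require Import structures.
From mathcomp Require Import all_boot all_order all_algebra all_fingroup all_field.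
From mathcomp Require Import ring zify.
Import Order.TTheory GRing.Theory Num.Theory.
Set Implicit Arguments. Unset Strict Implicit. Unset Printing Implicit Defensive.
Local Open Scope ring_scope.

(* Since [tau] maps [zeta_p] to [zeta_p ^+ g^2], it sends [theta_j = e(a j^2/p)] to
   [theta_(sigma j)], where [sigma j] is the representative in [[0, r]] of [+-gj mod p].
   As [j |-> j^2 mod p] is injective on [[0, r]], [sigma] is a permutation fixing [0],
   so [tau(V_Q) = P V_Q] for its permutation matrix [P], which is pinned down by the
   column of the [theta_j]. The same substitution gives
   [tau(e(B(j,k))) = e(+-B(sigma j, sigma k))], and [tau] fixes [G_Q] (reindex
   [x |-> gx]), so [tau(S) = P S P^-1] and [tau(T) = P T P^-1]. Finally both
   [h |-> tau(xi h)] and [h |-> P xi(h) P^-1] are multiplicative on [SL_2(F_p)],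
   which is generated by [s] and [t]. *)

Definition mx2 (R : Type) (a b c d : R) : 'M[R]_2 :=
  \matrix_(i < 2, j < 2) if i == 0 :> nat then (if j == 0 :> nat then a else b)
                         else (if j == 0 :> nat then c else d).

Lemma mx2_eta (R : Type) (A : 'M[R]_2) : A = mx2 (A 0 0) (A 0 1) (A 1 0) (A 1 1).
Proof.
by apply/matrixP => -[[|[|i]] hi] [[|[|j]] hj]; rewrite !mxE //=; congr (A _ _); apply: val_inj.
Qed.

Lemma mx2_mul (R : pzRingType) (a b c d a' b' c' d' : R) :
  mx2 a b c d *m mx2 a' b' c' d' =
  mx2 (a * a' + b * c') (a * b' + b * d') (c * a' + d * c') (c * b' + d * d').
Proof.
apply/matrixP => i j; rewrite !mxE !big_ord_recl big_ord0 !mxE /= addr0.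
by case: i j => [[|[|i]] hi] [[|[|j]] hj].
Qed.

Lemma det_mx2 (R : comPzRingType) (a b c d : R) : \det (mx2 a b c d) = a * d - b * c.
Proof.
rewrite (expand_det_row _ ord0) !big_ord_recl big_ord0 /cofactor !det_mx11 !mxE /=.
by rewrite expr0 expr1 mul1r mulN1r addr0 mulrN.
Qed.

Lemma mat_sE p : mat_s p = mx2 0 (-1) 1 0.
Proof. by apply/matrixP => -[[|[|i]] hi] [[|[|j]] hj]; rewrite !mxE. Qed.

Lemma mat_tE p : mat_t p = mx2 1 1 0 1.
Proof. by apply/matrixP => -[[|[|i]] hi] [[|[|j]] hj]; rewrite !mxE. Qed.

Section SL2Generation.

Variables (p : nat) (P : 'M['F_p]_2 -> Prop).
Hypothesis P_mul : forall g h, inSL2 g -> inSL2 h -> P g -> P h -> P (g *m h).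
Hypotheses (P_s : P (mat_s p)) (P_t : P (mat_t p)).

Let PSL g := inSL2 g /\ P g.

Let PSL_mul g h : PSL g -> PSL h -> PSL (g *m h).
Proof.
by move=> [dg Pg] [dh Ph]; split; [rewrite /inSL2 det_mulmx dg dh mulr1 | exact: P_mul].
Qed.

Let PSL_s : PSL (mx2 0 (-1) 1 0).
Proof. by split; [rewrite /inSL2 det_mx2; ring | rewrite -mat_sE]. Qed.

Let PSL_t : PSL (mx2 1 1 0 1).
Proof. by split; [rewrite /inSL2 det_mx2; ring | rewrite -mat_tE]. Qed.

Let PSL_sV : PSL (mx2 0 1 (-1) 0).
Proof.
have -> : mx2 0 1 (-1) 0 = mx2 0 (-1) 1 0 *m mx2 0 (-1) 1 0 *m mx2 (0 : 'F_p) (-1) 1 0.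
  by rewrite !mx2_mul; congr mx2; ring.
by repeat apply: PSL_mul.
Qed.

Let PSL_upper x : PSL (mx2 1 x 0 1).
Proof.
rewrite -[x]natr_Zp; elim: (val x) => [|n IHn].
  have -> : mx2 1 0%:R 0 1 = mx2 0 (-1) 1 0 *m mx2 (0 : 'F_p) 1 (-1) 0.
    by rewrite mx2_mul; congr mx2; ring.
  exact: PSL_mul.
have -> : mx2 1 n.+1%:R 0 1 = mx2 1 n%:R 0 1 *m mx2 (1 : 'F_p) 1 0 1.
  by rewrite mx2_mul mulrS; congr mx2; ring.
exact: PSL_mul.
Qed.

(* Bruhat decomposition of the big cell. *)
Let PSL_big_cell a b c d : c != 0 -> a * d - b * c = 1 -> PSL (mx2 a b c d).
Proof.
move=> c0 det1; have -> : mx2 a b c d = mx2 1 ((a - 1) / c) 0 1 *m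
   (mx2 0 (-1) 1 0 *m mx2 1 (- c) 0 1 *m mx2 0 1 (-1) 0) *m mx2 1 ((d - 1) / c) 0 1.
  have -> : b = (a * d - 1) / c by rewrite -det1; field.
  by rewrite !mx2_mul; congr mx2; field.
by repeat apply: PSL_mul.
Qed.

Lemma SL2_ind h : inSL2 h -> P h.
Proof.
rewrite /inSL2 [h]mx2_eta det_mx2.
move: (h 0 0) (h 0 1) (h 1 0) (h 1 1) => a b c d det1.
suff [] : PSL (mx2 a b c d) by [].
have [c0|] := eqVneq c 0; last by move/PSL_big_cell; apply.
have d0 : d != 0 by apply: contra_eq_neq det1 => ->; rewrite c0 !mulr0 subr0 eq_sym oner_eq0.
have -> : mx2 a b c d = mx2 b (- a) d (- c) *m mx2 0 1 (-1) 0.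
  by rewrite mx2_mul; congr mx2; ring.
apply: PSL_mul _ PSL_sV; apply: PSL_big_cell d0 _.
by rewrite -det1 c0; ring.
Qed.

End SL2Generation.

Section PrimeRootOfUnity.

Variable p : nat.
Hypothesis pr_p : prime p.

Lemma Fp_natE m n : (m%:R : 'F_p) = n%:R <-> m = n %[mod p].
Proof. by split=> [/(congr1 val)|mn]; [|apply: val_inj]; rewrite /= !val_Fp_nat. Qed.

Lemma zeta_prim : p.-primitive_root (zeta p).
Proof.
have wp : p.-root (-1) ^+ p = -1 :> algC by rewrite rootCK ?prime_gt0.
have zp : zeta p ^+ p = 1 by rewrite /zeta -exprM mulnC exprM wp sqrrN expr1n.
have [m zm m_dvd] := prim_order_exists (prime_gt0 pr_p) zp.
have [_ /(_ m m_dvd)/orP[]/eqP m_eq] := primeP pr_p; last by rewrite m_eq in zm.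
(* [w ^+ 2 = 1] is impossible for [w = p.-root (-1)]: [w <> 1] as [w ^+ p = -1],
   and [w <> -1] as [w] is not negative *)
move: zm; rewrite m_eq => /prim_expr_order; rewrite expr1 => /eqP.
rewrite -subr_eq0 subr_sqr_1 mulf_eq0 => /orP[|]; rewrite ?subr_eq0 ?addr_eq0 => /eqP w_eq.
  by move: wp; rewrite w_eq expr1n => /eqP; rewrite -subr_eq0 opprK -mulr2n pnatr_eq0.
by have := rootC_lt0 (-1 : algC) (prime_gt1 pr_p); rewrite w_eq oppr_lt0 ltr01.
Qed.

Lemma zeta_expE m n : zeta p ^+ m = zeta p ^+ n <-> (m%:R : 'F_p) = n%:R.
Proof.
rewrite Fp_natE; split=> [/eqP|mn]; last by apply/eqP; rewrite (eq_prim_root_expr zeta_prim) mn.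
by rewrite (eq_prim_root_expr zeta_prim) => /eqP.
Qed.

Lemma zeta_expV m n : (m%:R : 'F_p) = - n%:R -> zeta p ^+ m = (zeta p ^+ n)^-1.
Proof.
move=> mn; have zn0 : zeta p ^+ n != 0.
  by rewrite expf_neq0 // (prim_root_eq0 zeta_prim) -lt0n prime_gt0.
apply: (mulIf zn0); rewrite mulVf // -exprD -(expr0 (zeta p)).
by apply/zeta_expE; rewrite natrD mn addNr.
Qed.

Lemma zeta_invD_sqrE m n : (m%:R : 'F_p) ^+ 2 = n%:R ^+ 2 ->
  (zeta p ^+ m)^-1 + zeta p ^+ m = (zeta p ^+ n)^-1 + zeta p ^+ n.
Proof.
move/eqP; rewrite eqf_sqr => /orP[]/eqP mn; first by move/zeta_expE: mn => ->.
by rewrite (zeta_expV mn) invrK addrC.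
Qed.

End PrimeRootOfUnity.

Section HalfRange.

Variable p : nat.
Hypotheses (pr_p : prime p) (odd_p : odd p).

Lemma rr_double : p = (rr p).*2.+1.
Proof. by case: p odd_p => //= n /negbTE n_even; rewrite -{1}(odd_double_half n) n_even. Qed.

Definition absmod (m : nat) : nat :=
  let k := (m %% p)%N in if (k <= rr p)%N then k else (p - k)%N.

Lemma absmod_le m : (absmod m <= rr p)%N.
Proof.
rewrite /absmod; case: (leqP (m %% p) (rr p)) => // gt_r.
by have := rr_double; have := ltn_pmod m (prime_gt0 pr_p); lia.
Qed.

Lemma sqr_absmod m : (absmod m)%:R ^+ 2 = m%:R ^+ 2 :> 'F_p.
Proof.
rewrite /absmod; case: (leqP (m %% p) (rr p)) => _; first by rewrite Fp_nat_mod.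
rewrite natrB ?(ltnW (ltn_pmod _ (prime_gt0 pr_p))) // (pchar_Fp_0 pr_p) Fp_nat_mod //.
by rewrite sub0r sqrrN.
Qed.

Lemma sqr_half_inj j k : (j <= rr p)%N -> (k <= rr p)%N ->
  j%:R ^+ 2 = k%:R ^+ 2 :> 'F_p -> j = k.
Proof.
move=> le_j le_k /eqP; rewrite eqf_sqr -addr_eq0 -natrD; have := rr_double => hp.
case/orP => [/eqP/Fp_natE|]; first by rewrite !modn_small; lia.
by rewrite -(dvdn_pcharf (pchar_Fp pr_p)) /dvdn modn_small => [/eqP|]; lia.
Qed.

Lemma exists_perm_sqr_mul u : (u%:R : 'F_p) != 0 ->
  exists s : {perm 'I_(rr p).+1},
    forall j : 'I_(rr p).+1, (s j)%:R ^+ 2 = (u * j)%:R ^+ 2 :> 'F_p.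
Proof.
move=> u0; pose f (j : 'I_(rr p).+1) : 'I_(rr p).+1 := inord (absmod (u * j)).
have fE j : f j = absmod (u * j) :> nat by rewrite inordK ?ltnS ?absmod_le.
have f_inj : injective f.
  move=> i j /(congr1 (fun k : 'I__ => (k%:R : 'F_p) ^+ 2)).
  rewrite /= !fE !sqr_absmod !natrM !exprMn => /(mulfI (expf_neq0 2 u0)).
  by move/sqr_half_inj => ij; apply/val_inj/ij; rewrite -ltnS.
by exists (perm f_inj) => j; rewrite permE fE sqr_absmod.
Qed.

End HalfRange.

Lemma perm_mx_conj (R : comUnitRingType) n (s : {perm 'I_n.+1}) (A : 'M[R]_n.+1) :
  perm_mx s *m A *m invmx (perm_mx s) = \matrix_(i, j) A (s i) (s j).
Proof.
have -> : invmx (perm_mx s) = perm_mx s^-1 :> 'M[R]_n.+1 by rewrite perm_mxV.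
by rewrite -col_permE -row_permE; apply/matrixP => i j; rewrite !mxE.
Qed.

Lemma perm_mx_mulI (R : pzSemiRingType) m n (s s' : {perm 'I_m}) (A : 'M[R]_(m, n)) k :
  injective (A^~ k) -> perm_mx s *m A = perm_mx s' *m A -> s = s'.
Proof.
move=> A_inj; rewrite -!row_permE => /matrixP eqA.
by apply/permP => i; apply: A_inj; have := eqA i k; rewrite !mxE.
Qed.

Section QuadraticExponential.

Variables p a : nat.
Hypothesis pr_p : prime p.

Lemma theta_sqrE j k : j%:R ^+ 2 = k%:R ^+ 2 :> 'F_p -> theta p a j = theta p a k.
Proof. by move=> jk; apply/(zeta_expE pr_p); rewrite !natrM -!expr2 jk. Qed.

Lemma sum_eQ_mul u : (u%:R : 'F_p) != 0 -> \sum_(x < p) eQ p a (u * x) = GQ p a.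
Proof.
move=> u0; pose f (x : 'I_p) : 'I_p := Ordinal (ltn_pmod (u * x) (prime_gt0 pr_p)).
have f_inj : injective f.
  move=> x y /(congr1 val)/(Fp_natE pr_p); rewrite !natrM => /(mulfI u0)/(Fp_natE pr_p).
  by rewrite !modn_small // => /val_inj.
rewrite /GQ [RHS](reindex_inj f_inj); apply: eq_bigr => x _.
by apply: theta_sqrE; rewrite /= Fp_nat_mod.
Qed.

Hypotheses (odd_p : odd p) (a0 : (a%:R : 'F_p) != 0).

Lemma theta_inj j k : (j <= rr p)%N -> (k <= rr p)%N -> theta p a j = theta p a k -> j = k.
Proof.
move=> le_j le_k /(zeta_expE pr_p); rewrite !natrM -!expr2 => /(mulfI a0).
exact: sqr_half_inj.
Qed.

Lemma Vmx_col1_inj : injective (fun j : 'I_(rr p).+1 => Vmx p a j (inord 1)).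
Proof.
have r_gt0 : (0 < rr p)%N by have := rr_double odd_p; have := prime_gt1 pr_p; lia.
move=> i j; rewrite !mxE inordK // !expr1 => /theta_inj ij.
by apply/val_inj/ij; rewrite -ltnS.
Qed.

End QuadraticExponential.

Section GaloisAction.

Variables (p a u : nat) (tau : {rmorphism algC -> algC}) (sigma : {perm 'I_(rr p).+1}).
Hypotheses (pr_p : prime p) (odd_p : odd p) (u0 : (u%:R : 'F_p) != 0).
Hypothesis tau_zeta : tau (zeta p) = zeta p ^+ (u * u).
Hypothesis sigmaE : forall j, (sigma j)%:R ^+ 2 = (u * j)%:R ^+ 2 :> 'F_p.

Lemma tau_zetaX m : tau (zeta p ^+ m) = zeta p ^+ (u * u * m).
Proof. by rewrite rmorphXn tau_zeta -exprM. Qed.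

Lemma tau_eQ j : tau (eQ p a j) = eQ p a (u * j).
Proof. by rewrite /eQ tau_zetaX; apply/(zeta_expE pr_p); rewrite !natrM; ring. Qed.

Lemma tau_theta (j : 'I_(rr p).+1) : tau (theta p a j) = theta p a (sigma j).
Proof. by rewrite (theta_sqrE a pr_p (sigmaE j)); apply: tau_eQ. Qed.

Lemma tau_GQ : tau (GQ p a) = GQ p a.
Proof.
by rewrite rmorph_sum -[RHS](sum_eQ_mul a pr_p u0); apply: eq_bigr => j _; apply: tau_eQ.
Qed.

Lemma sigma_eq0 j : (sigma j == 0 :> nat) = (j == 0 :> nat).
Proof.
have sigma0 : sigma ord0 = ord0.
  apply/val_inj; apply: (sqr_half_inj pr_p odd_p (leq_ord _) (leq_ord _)).
  by rewrite sigmaE muln0.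
by have := inj_eq (@perm_inj _ sigma) j ord0; rewrite sigma0.
Qed.

Lemma tau_invD_eB (j k : 'I_(rr p).+1) : (tau (eB p a j k))^-1 + tau (eB p a j k) =
  (eB p a (sigma j) (sigma k))^-1 + eB p a (sigma j) (sigma k).
Proof.
rewrite /eB tau_zetaX; apply: zeta_invD_sqrE => //.
by rewrite !natrM !exprMn sigmaE [in RHS]sigmaE !natrM; ring.
Qed.

Lemma tau_Vmx : map_mx tau (Vmx p a) = perm_mx sigma *m Vmx p a.
Proof. by rewrite -row_permE; apply/matrixP => i j; rewrite !mxE rmorphXn tau_theta. Qed.

Lemma tau_Tmx : map_mx tau (Tmx p a) = perm_mx sigma *m Tmx p a *m invmx (perm_mx sigma).
Proof.
rewrite perm_mx_conj; apply/matrixP => i j.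
by rewrite !mxE rmorphMn tau_theta (inj_eq (@perm_inj _ sigma)).
Qed.

Lemma tau_Smx : map_mx tau (Smx p a) = perm_mx sigma *m Smx p a *m invmx (perm_mx sigma).
Proof.
rewrite perm_mx_conj; apply/matrixP => i j; rewrite !mxE !sigma_eq0.
case: ifP => _; first by rewrite fmorphV tau_GQ.
case: ifP => _; first by rewrite rmorphM rmorph_nat fmorphV tau_GQ.
by rewrite rmorphM rmorphD !fmorphV tau_GQ tau_invD_eB.
Qed.

End GaloisAction.

Theorem theorem2 (p : nat) (pr_p : prime p) (odd_p : odd p)
  (a : nat) (Ha : a = 1%N \/ qnr p a)
  (xi : 'M['F_p]_2 -> 'M[algC]_((rr p).+1))
  (Hxi : is_rep xi)
  (Hs : xi (mat_s p) = Smx p a) (Ht : xi (mat_t p) = Tmx p a)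
  (gam : {rmorphism algC -> algC}) (g : nat)
  (Hg : (p.-1).-primitive_root (g%:R : 'F_p))
  (Hgam : gam (zeta p) = zeta p ^+ g) :
  let tau := fun x : algC => gam (gam x) in
  [/\ tau (theta p a 0) = theta p a 0,
      (forall j : 'I_(rr p).+1, exists k : 'I_(rr p).+1,
          tau (theta p a j) = theta p a k) &
      exists P : 'M[algC]_((rr p).+1),
        [/\ is_perm_mx P,
            map_mx tau (Vmx p a) = P *m Vmx p a,
            (forall P' : 'M[algC]_((rr p).+1), is_perm_mx P' ->
                map_mx tau (Vmx p a) = P' *m Vmx p a -> P' = P) &
            (forall h : 'M['F_p]_2, inSL2 h ->
                map_mx tau (xi h) = P *m xi h *m invmx P)]].
Proof.
have a0 : (a%:R : 'F_p) != 0.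
  by case: Ha => [->|/andP[a_p _]]; rewrite ?oner_neq0 // -(dvdn_pcharf (pchar_Fp pr_p)).
have g0 : (g%:R : 'F_p) != 0.
  apply: contra_eq_neq (prim_expr_order Hg) => ->.
  by rewrite expr0n eqn0Ngt -subn1 subn_gt0 prime_gt1 // eq_sym oner_neq0.
pose tau : {rmorphism algC -> algC} := gam \o gam.
have tau_zeta : tau (zeta p) = zeta p ^+ (g * g) by rewrite /= Hgam rmorphXn Hgam -exprM.
have [sigma sigmaE] := exists_perm_sqr_mul pr_p odd_p g0.
have [_ xiM] := Hxi.
rewrite -[fun x => gam (gam x)]/(tau : algC -> algC).
split; first by rewrite /theta /eQ muln0 !rmorph1.
  by move=> j; exists (sigma j); apply: (tau_theta _ pr_p tau_zeta sigmaE).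
exists (perm_mx sigma); split; first exact: perm_mx_is_perm.
- exact: (tau_Vmx _ pr_p tau_zeta sigmaE).
- move=> _ /is_perm_mxP[s' ->]; rewrite (tau_Vmx _ pr_p tau_zeta sigmaE).
  by move/(perm_mx_mulI (Vmx_col1_inj pr_p odd_p a0)) ->.
apply: (SL2_ind (P := fun h =>
  map_mx tau (xi h) = perm_mx sigma *m xi h *m invmx (perm_mx sigma))).
- move=> h1 h2 h1_SL h2_SL /= IH1 IH2.
  by rewrite xiM // map_mxM IH1 IH2 !mulmxA mulmxKV ?unitmx_perm.
- by rewrite /= Hs (tau_Smx _ pr_p odd_p g0 tau_zeta sigmaE).
- by rewrite /= Ht (tau_Tmx _ pr_p tau_zeta sigmaE).
Qed.
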